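(* In the setup of the context, let $J$ be the $F$-vector space with basis $(t_x)_{x\in B}$ and bilinear multiplication $t_xt_y:=\sum_{z\in B}\gamma_{x,y,z}t_{z^\ast}$. Then: (a) $J$ is an associative $F$-algebra with identity element $1_J=\sum_{d\in\mathcal D}n_dt_d$, where $\mathcal D:=\{x\in B\mid n_x\neq0\}$; (b) the $F$-linear map $\bar\tau:J\to F$, $\bar\tau(t_x):=n_x$, is a trace form making $J$ a symmetric $F$-algebra; (c) the $F$-linear map $t_x\mapsto t_x^\ast:=t_{x^\ast}$ is an antiautomorphism of $J$, and $(t_x)_{x\in B}$ is a $\ast$-symmetric basis of $J$ with respect to $\bar\tau$, i.e. $\bar\tau(t_{x^\ast}t_y)=\delta_{xy}$... more precisely $\bar\tau(t_xt_y^\ast)=\delta_{xy}$ for all $x,y\in B$.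
   Context: Setup: $\Gamma$ totally ordered abelian group; $K$ field with surjective valuation $\nu$, valuation ring $\mathcal O$, maximal ideal $\mathfrak m$, formally real residue field $F$. $H$ finite-dimensional split semisimple symmetric $K$-algebra with trace form $\tau$, $K$-linear involutive antiautomorphism $\ast$, $\ast$-symmetric basis $B$ ($B^\ast=B$, $\tau(bc^\ast)=\delta_{bc}$). Simple modules indexed by $\Lambda$, characters $\chi_\lambda$, Schur elements $c_\lambda$ with $\tau=\sum c_\lambda^{-1}\chi_\lambda$, $a_\lambda=-\tfrac12\nu(c_\lambda)\in\Gamma$. Fix a homomorphism $\langle a_\lambda\rangle\to K^\times$, $\gamma\mapsto v^\gamma$, with $\nu(v^\gamma)=\gamma$, and put $f_\lambda:=v^{2a_\lambda}c_\lambda\in\mathcal O^\times$. For each $\lambda$ choose a balanced matrix representation $\rho_\lambda$ of type $\lambda$ (irreducible with $\nu(\rho_\lambda(b))\ge-a_\lambda$ for all $b$ in every $\ast$-symmetric basis) and set $c^\lambda(x):=v^{a_\lambda}\rho_\lambda(x)\bmod\mathfrak m$. Define $\gamma_{x,y,z}:=\sum_\lambda\sum_{\mathfrak{s,t,u}}f_\lambda^{-1}c^\lambda(x)_{\mathfrak{st}}c^\lambda(y)_{\mathfrak{tu}}c^\lambda(z)_{\mathfrak{us}}$ and $n_x:=\sum_\lambda\sum_{\mathfrak s}f_\lambda^{-1}c^\lambda(x^\ast)_{\mathfrak{ss}}$ (elements of $F$). *)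

From HB Require Import structures.
From mathcomp Require Import all_boot all_order all_algebra all_field.
Set Implicit Arguments. Unset Strict Implicit. Unset Printing Implicit Defensive.
Import Order.TTheory GRing.Theory Num.Theory.
Local Open Scope ring_scope.

Definition tot_ord_group (G : porderZmodType) : Prop :=
  (forall x y : G, (x <= y) || (y <= x)) /\
  (forall x y z : G, x <= y -> x + z <= y + z).

(* ---------- valuations (nu is only meaningful on K^x; nu(0) = +oo) ---------- *)
Definition surj_valuation (K : fieldType) (G : porderZmodType) (nu : K -> G) : Prop :=
  [/\ forall x y : K, x != 0 -> y != 0 -> nu (x * y) = nu x + nu y,
      forall x y : K, x != 0 -> y != 0 -> x + y != 0 ->
        (nu x <= nu (x + y)) || (nu y <= nu (x + y)) &
      forall g : G, exists2 x : K, x != 0 & nu x = g].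

(* "nu x >= g", with the convention nu 0 = +oo *)
Definition vge (K : fieldType) (G : porderZmodType) (nu : K -> G) (x : K) (g : G) : bool :=
  (x == 0) || (g <= nu x).

Definition valO (K : fieldType) (G : porderZmodType) (nu : K -> G) : {pred K} :=
  fun x => vge nu x 0.
Definition valm (K : fieldType) (G : porderZmodType) (nu : K -> G) : {pred K} :=
  fun x => (x == 0) || (0 < nu x).

(* pi : O -> F is a surjective ring morphism with kernel m, i.e. F = O/m *)
Definition residue_map (K : fieldType) (G : porderZmodType) (nu : K -> G)
    (F : fieldType) (pi : K -> F) : Prop :=
  [/\ {in valO nu &, forall x y, pi (x + y) = pi x + pi y},
      {in valO nu &, forall x y, pi (x * y) = pi x * pi y},
      pi 1 = 1,
      forall u : F, exists2 x, x \in valO nu & pi x = u &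
      {in valO nu, forall x, (pi x == 0) = (x \in valm nu)}].

Definition formally_real (F : fieldType) : Prop :=
  forall (n : nat) (s : 'I_n -> F), \sum_(i < n) s i ^+ 2 != -1.

Definition sym_trace_form (K : fieldType) (H : falgType K) (tau : H -> K) : Prop :=
  [/\ forall (a : K) (x y : H), tau (a *: x + y) = a * tau x + tau y,
      forall x y : H, tau (x * y) = tau (y * x) &
      forall x : H, (forall y : H, tau (x * y) = 0) -> x = 0].

Definition lin_invol_antiaut (K : fieldType) (H : falgType K) (st : H -> H) : Prop :=
  [/\ forall (a : K) (x y : H), st (a *: x + y) = a *: st x + st y,
      forall x y : H, st (x * y) = st y * st x &
      forall x : H, st (st x) = x].

Definition star_sym_basis (K : fieldType) (H : falgType K) (tau : H -> K)
    (st : H -> H) (I : finType) (b : I -> H) : Prop :=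
  [/\ basis_of fullv [seq b i | i <- enum I],
      forall i, exists j, b j = st (b i) &
      forall i j, tau (b i * st (b j)) = (i == j)%:R].

Definition alg_rep (K : fieldType) (H : falgType K) (n : nat) (r : H -> 'M[K]_n) : Prop :=
  [/\ forall (a : K) (x y : H), r (a *: x + y) = a *: r x + r y,
      forall x y : H, r (x * y) = r x *m r y &
      r 1 = 1%:M].

(* H is split semisimple and (rho_l)_l is a complete irredundant family of
   irreducible representations: the map h |-> (rho_l h)_l is bijective onto
   prod_l M_{d_l}(K) (Wedderburn--Artin). *)
Definition split_semisimple_reps (K : fieldType) (H : falgType K) (L : finType)
    (d : L -> nat) (rho : forall l, H -> 'M[K]_(d l)) : Prop :=
  (forall l, (0 < d l)%N) /\
  (forall M : forall l, 'M[K]_(d l), exists! h : H, forall l, rho l h = M l).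

Definition balanced (K : fieldType) (G : porderZmodType) (nu : K -> G)
    (H : falgType K) (tau : H -> K) (st : H -> H) (n : nat) (r : H -> 'M[K]_n)
    (al : G) : Prop :=
  forall (m : nat) (b' : 'I_m -> H), star_sym_basis tau st b' ->
    forall k i j, vge nu (r (b' k) i j) (- al).

Definition in_span (G : porderZmodType) (L : finType) (a : L -> G) (g : G) : Prop :=
  exists k : L -> int, g = \sum_l a l *~ k l.

Definition vpow_hom (K : fieldType) (G : porderZmodType) (nu : K -> G)
    (L : finType) (a : L -> G) (vp : G -> K) : Prop :=
  [/\ forall g h, in_span a g -> in_span a h -> vp (g + h) = vp g * vp h,
      forall g, in_span a g -> vp g != 0 &
      forall g, in_span a g -> nu (vp g) = g].

Definition cres (K : fieldType) (G : porderZmodType) (F : fieldType) (pi : K -> F)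
    (H : falgType K) (I : finType) (b : I -> H) (L : finType) (d : L -> nat)
    (rho : forall l, H -> 'M[K]_(d l)) (a : L -> G) (vp : G -> K)
    (l : L) (x : I) : 'M[F]_(d l) :=
  map_mx pi (vp (a l) *: rho l (b x)).

(* f_l := v^{2 a_l} c_l  (an element of O^x) *)
Definition fsch (K : fieldType) (G : porderZmodType) (L : finType)
    (c : L -> K) (a : L -> G) (vp : G -> K) (l : L) : K :=
  vp (a l *+ 2) * c l.

(* gamma_{x,y,z} and n_x, given the residue matrices cm and residues fr of f_l *)
Definition gammaJ (F : fieldType) (L : finType) (d : L -> nat) (I : finType)
    (cm : forall l, I -> 'M[F]_(d l)) (fr : L -> F) (x y z : I) : F :=
  \sum_l \sum_(s < d l) \sum_(t < d l) \sum_(u < d l)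
     (fr l)^-1 * cm l x s t * cm l y t u * cm l z u s.

Definition nJ (F : fieldType) (L : finType) (d : L -> nat) (I : finType)
    (cm : forall l, I -> 'M[F]_(d l)) (fr : L -> F) (sI : I -> I) (x : I) : F :=
  \sum_l \sum_(s < d l) (fr l)^-1 * cm l (sI x) s s.

Section J.
Variables (F : fieldType) (I : finType) (gm : I -> I -> I -> F) (nx : I -> F)
  (sI : I -> I).

Definition tJ (x : I) : {ffun I -> F^o} := [ffun y => (y == x)%:R].

Definition Jmul (u w : {ffun I -> F^o}) : {ffun I -> F^o} :=
  \sum_x \sum_y (u x * w y) *: \sum_z gm x y z *: tJ (sI z).

Definition Jone : {ffun I -> F^o} := \sum_(x | nx x != 0) nx x *: tJ x.

Definition Jtau (u : {ffun I -> F^o}) : F := \sum_x u x * nx x.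

Definition Jstar (u : {ffun I -> F^o}) : {ffun I -> F^o} := \sum_x u x *: tJ (sI x).
End J.

From HB Require Import structures.
From mathcomp Require Import all_boot all_order all_algebra all_field.
From mathcomp Require Import ring.
Set Implicit Arguments. Unset Strict Implicit. Unset Printing Implicit Defensive.
Import Order.TTheory GRing.Theory Num.Theory.
Local Open Scope ring_scope.

(* Reducing the scaled matrix coefficients v^{a_l} rho_l(b_x) modulo m turns
   Schur's orthogonality relations for H (a consequence of the trace formula
   and of Wedderburn's theorem) into the same relations for the residue
   matrices c^l(x), with Schur elements f_l.  These relations say precisely
   that u |-> (sum_x u_x c^l(x))_l is a bijection from J onto the product of
   the matrix algebras M_{d_l}(F), with inverse
   A |-> (sum_l f_l^-1 tr(A_l c^l(x^\ast)))_x, which carries the product of J to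
   the matrix product, 1_J to 1 and tbar to sum_l f_l^-1 tr.  Everything then
   follows from matrix algebra, except that for the antiautomorphism one needs
   c^l(x^\ast)^T to be conjugate to c^l(x): the conjugating matrix is the residue
   of v^{2a_l} sum_x rho_l(b_x)^T rho_l(b_x), which stays invertible because F
   is formally real. *)

Lemma formally_real_sumsq_eq0 (F : fieldType) (T : finType) (g : T -> F) :
  formally_real F -> \sum_t g t ^+ 2 = 0 -> forall t, g t = 0.
Proof.
move=> realF sum0 t0; apply/eqP/negPn/negP => gt0_neq0.
have := realF #|T| (fun i => if enum_val i == t0 then 0 else g (enum_val i) / g t0).
rewrite -(big_enum_val (fun x => (if x == t0 then 0 else g x / g t0) ^+ 2)) /=.
rewrite (bigD1 t0) //= eqxx expr0n add0r.
rewrite (eq_bigr (fun x => g x ^+ 2 / g t0 ^+ 2)) => [|x /negbTE ->]; last first.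
  by rewrite expr_div_n.
rewrite -mulr_suml.
have -> : \sum_(x | x != t0) g x ^+ 2 = - g t0 ^+ 2.
  by apply/eqP; rewrite -addr_eq0 addrC; move: sum0; rewrite (bigD1 t0) // => ->.
by rewrite mulNr mulfV ?eqxx // expf_neq0.
Qed.

(* [v (sum_x A_x^T A_x) v^T] is the sum of the squares of the entries of the [v A_x^T]. *)
Lemma formally_real_gram_unitmx (F : fieldType) (T : finType) m n
    (A : T -> 'M[F]_(m, n)) :
  formally_real F -> (forall v : 'rV_n, (forall x, v *m (A x)^T = 0) -> v = 0) ->
  \sum_x (A x)^T *m A x \in unitmx.
Proof.
move=> realF kerA; rewrite unitmxE unitfE; apply/negP => /det0P [v /negP vN0 vA0].
apply/vN0/eqP/kerA => x; apply/rowP => i; rewrite [RHS]mxE.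
pose w (p : T * 'I_m) : F := (v *m (A p.1)^T) 0 p.2.
apply: (formally_real_sumsq_eq0 (g := w) realF _ (x, i)).
rewrite -(pair_bigA _ (fun x i => w (x, i) ^+ 2)) /=.
have : (v *m (\sum_x (A x)^T *m A x) *m v^T) 0 0 = 0 by rewrite vA0 mul0mx mxE.
rewrite mulmx_sumr mulmx_suml summxE => E.
apply: etrans E; apply: eq_bigr => y _.
rewrite mulmxA -mulmxA -[A y *m v^T]trmxK trmx_mul trmxK mxE.
by apply: eq_bigr => j _; rewrite /w /= expr2 [X in _ = _ * X]mxE.
Qed.

Section JAlgebra.
Variables (F : fieldType) (I L : finType) (d : L -> nat).

(* Row and column indices of different blocks live in different ordinal
   types, hence are compared as natural numbers. *)
Definition schur_relations (cm : forall l, I -> 'M[F]_(d l)) (fr : L -> F)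
    (sI : I -> I) :=
  forall l m (i j : 'I_(d l)) (q p : 'I_(d m)),
    \sum_x cm l x i j * cm m (sI x) q p =
    ((l == m) && (i == p :> nat) && (j == q :> nat))%:R * fr m.

Definition dual_trace_relations (cm : forall l, I -> 'M[F]_(d l)) (fr : L -> F)
    (sI : I -> I) :=
  forall x y, \sum_l (fr l)^-1 * \tr (cm l x *m cm l (sI y)) = (x == y)%:R.

Definition transpose_conjugate (cm : forall l, I -> 'M[F]_(d l)) (sI : I -> I) :=
  forall l, exists2 P : 'M[F]_(d l), P \in unitmx &
    forall x, (cm l (sI x))^T *m P = P *m cm l x.

Lemma sum_delta_ord l (k k' : 'I_(d l)) (g : forall m, 'I_(d m) -> 'I_(d m) -> F) :
  \sum_m \sum_(i < d m) \sum_(j < d m)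
      g m i j * ((l == m) && (k == i :> nat) && (k' == j :> nat))%:R = g l k k'.
Proof.
rewrite (bigD1 l) //= [X in _ + X]big1 => [|m /negbTE ml]; last first.
  by apply: big1 => i _; apply: big1 => j _; rewrite eq_sym ml mulr0.
rewrite eqxx addr0 (bigD1 k) //= [X in _ + X]big1 => [|i ik]; last first.
  by apply: big1 => j _; rewrite eq_sym (negbTE (ik : (i != k :> nat))) mulr0.
rewrite eqxx addr0 (bigD1 k') //= [X in _ + X]big1 => [|j jk]; last first.
  by rewrite eq_sym (negbTE (jk : (j != k' :> nat))) mulr0.
by rewrite eqxx mulr1 addr0.
Qed.

Variables (cm : forall l, I -> 'M[F]_(d l)) (fr : L -> F) (sI : I -> I).
Hypotheses (sIK : involutive sI) (fr_neq0 : forall l, fr l != 0).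
Hypotheses (schur : schur_relations cm fr sI) (dual : dual_trace_relations cm fr sI).

Local Notation gm := (gammaJ cm fr).
Local Notation nx := (nJ cm fr sI).
Local Notation Jst := (Jstar (F := F) sI).

Lemma sum_scale_tJ (a : I -> F) : \sum_y a y *: tJ F y = [ffun y => a y].
Proof.
apply/ffunP => z; rewrite sum_ffunE !ffunE (bigD1 z) //= big1 => [|y /negbTE yz].
  by rewrite !ffunE eqxx addr0; apply: mulr1.
by rewrite !ffunE eq_sym yz scaler0.
Qed.

Definition Jrep l (u : {ffun I -> F^o}) : 'M[F]_(d l) := \sum_x u x *: cm l x.

Fact Jrep_is_linear l : linear (Jrep l).
Proof.
move=> k u w; rewrite /Jrep scaler_sumr -big_split; apply: eq_bigr => x _.
by rewrite !ffunE scalerDl scalerA.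
Qed.
HB.instance Definition _ l :=
  GRing.isLinear.Build F {ffun I -> F^o} 'M[F]_(d l) _ (Jrep l) (Jrep_is_linear l).

Lemma Jrep_tJ l z : Jrep l (tJ F z) = cm l z.
Proof.
rewrite /Jrep (bigD1 z) //= big1 => [|x /negbTE xz].
  by rewrite ffunE eqxx scale1r addr0.
by rewrite ffunE xz scale0r.
Qed.

Definition Jrep_inv (A : forall l, 'M[F]_(d l)) : {ffun I -> F^o} :=
  [ffun z => \sum_l (fr l)^-1 * \tr (A l *m cm l (sI z))].

Lemma gammaJE x y z :
  gm x y z = \sum_l (fr l)^-1 * \tr (cm l x *m cm l y *m cm l z).
Proof.
apply: eq_bigr => l _; rewrite /mxtrace mulr_sumr; apply: eq_bigr => s _.
rewrite mxE mulr_sumr exchange_big /=; apply: eq_bigr => u _.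
by rewrite mxE mulr_suml mulr_sumr; apply: eq_bigr => t _; rewrite !mulrA.
Qed.

Lemma nJE z : nx z = \sum_l (fr l)^-1 * \tr (cm l (sI z)).
Proof. by apply: eq_bigr => l _; rewrite mulr_sumr. Qed.

Lemma JmulE u w : Jmul gm sI u w = Jrep_inv (fun l => Jrep l u *m Jrep l w).
Proof.
have sum_gm_tJ x y : \sum_z gm x y z *: tJ F (sI z) = [ffun z => gm x y (sI z)].
  rewrite -sum_scale_tJ (reindex_inj (inv_inj sIK)) /=.
  by apply: eq_bigr => z _; rewrite sIK.
apply/ffunP => z; rewrite /Jmul; under eq_bigr do under eq_bigr do rewrite sum_gm_tJ.
rewrite !ffunE sum_ffunE; under eq_bigr do rewrite sum_ffunE.
under eq_bigr do under eq_bigr do rewrite !ffunE gammaJE scaler_sumr.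
under [RHS]eq_bigr do rewrite /Jrep mulmx_suml mulmx_suml raddf_sum mulr_sumr.
rewrite [RHS]exchange_big; apply: eq_bigr => x _ /=.
under [RHS]eq_bigr do rewrite mulmx_sumr mulmx_suml raddf_sum mulr_sumr.
rewrite [RHS]exchange_big; apply: eq_bigr => y _ /=.
apply: eq_bigr => l _; rewrite -scalemxAr -!scalemxAl !mxtraceZ.
by rewrite -[_ *: _]/(_ * _); ring.
Qed.

Lemma Jrep_invK A l : Jrep l (Jrep_inv A) = A l.
Proof.
apply/matrixP => k k'; rewrite summxE.
transitivity (\sum_m \sum_(i < d m) \sum_(j < d m) (fr m)^-1 * A m i j *
                 \sum_z cm l z k k' * cm m (sI z) j i).
  under eq_bigr => z _ do rewrite mxE ffunE big_distrl.
  rewrite exchange_big; apply: eq_bigr => m _ /=.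
  under eq_bigr => z _ do rewrite /mxtrace mulr_sumr big_distrl.
  rewrite exchange_big; apply: eq_bigr => i _ /=.
  under eq_bigr => z _ do rewrite mxE !mulr_sumr big_distrl.
  rewrite exchange_big; apply: eq_bigr => j _ /=.
  by rewrite mulr_sumr; apply: eq_bigr => z _; ring.
under eq_bigr do under eq_bigr do under eq_bigr do rewrite schur [_ * fr _]mulrC mulrA.
by rewrite sum_delta_ord mulrAC mulVf ?mul1r.
Qed.

Lemma JrepK u : Jrep_inv (fun l => Jrep l u) = u.
Proof.
apply/ffunP => y; rewrite ffunE.
under eq_bigr => l _ do rewrite /Jrep mulmx_suml raddf_sum mulr_sumr.
rewrite exchange_big /= (bigD1 y) //= [X in _ + X]big1 => [|x /negbTE xy]; last first.
  under eq_bigr => l _ do rewrite -scalemxAl mxtraceZ mulrCA.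
  by rewrite -mulr_sumr dual xy mulr0.
under eq_bigr => l _ do rewrite -scalemxAl mxtraceZ mulrCA.
by rewrite -mulr_sumr dual eqxx mulr1 addr0.
Qed.

Lemma Jrep_inj u w : (forall l, Jrep l u = Jrep l w) -> u = w.
Proof.
move=> eq_uw; rewrite -[u]JrepK -[w]JrepK; apply/ffunP => y; rewrite !ffunE.
by apply: eq_bigr => l _; rewrite eq_uw.
Qed.

Lemma Jrep_mul l u w : Jrep l (Jmul gm sI u w) = Jrep l u *m Jrep l w.
Proof. by rewrite JmulE Jrep_invK. Qed.

Lemma JoneE : Jone nx = Jrep_inv (fun l => 1%:M).
Proof.
rewrite /Jone big_mkcond /= -[RHS]sum_scale_tJ; apply: eq_bigr => z _.
under eq_bigr do rewrite mul1mx; rewrite -nJE.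
by case: eqP => [->|]; rewrite ?scale0r.
Qed.

Lemma Jrep_one l : Jrep l (Jone nx) = 1%:M.
Proof. by rewrite JoneE Jrep_invK. Qed.

Lemma Jmul_assoc u v w :
  Jmul gm sI (Jmul gm sI u v) w = Jmul gm sI u (Jmul gm sI v w).
Proof. by apply: Jrep_inj => l; rewrite !Jrep_mul mulmxA. Qed.

Lemma Jmul1 u : Jmul gm sI (Jone nx) u = u /\ Jmul gm sI u (Jone nx) = u.
Proof.
by split; apply: Jrep_inj => l; rewrite Jrep_mul Jrep_one ?mul1mx ?mulmx1.
Qed.

Lemma cm_rows_separate l (v : 'rV_(d l)) : (forall x, v *m (cm l x)^T = 0) -> v = 0.
Proof.
move=> v_perp; apply/rowP => q; rewrite [RHS]mxE; apply: (mulIf (fr_neq0 l)).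
transitivity (\sum_x (v *m (cm l x)^T) 0 q * cm l (sI x) q q); last first.
  by rewrite mul0r big1 // => x _; rewrite v_perp mxE mul0r.
under [RHS]eq_bigr do rewrite mxE big_distrl.
rewrite [RHS]exchange_big (bigD1 q) //= [X in _ + X]big1 => [|j jq]; last first.
  under eq_bigr do rewrite !mxE -mulrA.
  by rewrite -mulr_sumr schur (negbTE (jq : (j != q :> nat))) andbF mul0r mulr0.
under eq_bigr do rewrite !mxE -mulrA.
by rewrite -mulr_sumr schur !eqxx mul1r addr0.
Qed.

Lemma Jtau_tJ x : Jtau nx (tJ F x) = nx x.
Proof.
rewrite /Jtau (bigD1 x) //= big1 => [|y /negbTE yx]; first by rewrite ffunE eqxx mul1r addr0.
by rewrite ffunE yx mul0r.
Qed.

Lemma JstarE u : Jst u = [ffun y => u (sI y)].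
Proof.
rewrite /Jstar (reindex_inj (inv_inj sIK)) /= -sum_scale_tJ.
by apply: eq_bigr => x _; rewrite sIK.
Qed.

Lemma Jstar_tJ x : Jst (tJ F x) = tJ F (sI x).
Proof. by apply/ffunP => z; rewrite JstarE !ffunE (inv_eq sIK). Qed.

Lemma Jstar_bij : bijective Jst.
Proof. by exists Jst => u; apply/ffunP => y; rewrite !JstarE !ffunE sIK. Qed.

Lemma Jrep_Jstar l u : Jrep l (Jst u) = \sum_x u x *: cm l (sI x).
Proof. by rewrite linear_sum; apply: eq_bigr => x _; rewrite linearZ /= Jrep_tJ. Qed.

Hypothesis transp : transpose_conjugate cm sI.

Lemma mxtrace_cm_sI l x : \tr (cm l (sI x)) = \tr (cm l x).
Proof.
have [P P_unit cmP] := transp l.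
by rewrite -mxtrace_tr -[_^T](mulmxK P_unit) cmP mxtrace_mulC mulmxA mulVmx ?mul1mx.
Qed.

Lemma Jtau_Jrep u : Jtau nx u = \sum_l (fr l)^-1 * \tr (Jrep l u).
Proof.
rewrite /Jtau; under eq_bigr => x _ do rewrite nJE mulr_sumr.
rewrite exchange_big; apply: eq_bigr => l _ /=.
rewrite raddf_sum mulr_sumr; apply: eq_bigr => x _.
by rewrite mxtrace_cm_sI /= mxtraceZ mulrCA.
Qed.

Lemma Jtau_mulC u w : Jtau nx (Jmul gm sI u w) = Jtau nx (Jmul gm sI w u).
Proof. by rewrite !Jtau_Jrep; apply: eq_bigr => l _; rewrite !Jrep_mul mxtrace_mulC. Qed.

Lemma Jtau_nondegenerate u : (forall w, Jtau nx (Jmul gm sI u w) = 0) -> u = 0.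
Proof.
move=> u_perp; apply/ffunP => y; rewrite -[u]JrepK !ffunE.
rewrite -[RHS](u_perp (tJ F (sI y))) Jtau_Jrep.
by apply: eq_bigr => l _; rewrite Jrep_mul Jrep_tJ.
Qed.

Lemma Jtau_dual_basis x y :
  Jtau nx (Jmul gm sI (tJ F x) (Jst (tJ F y))) = (x == y)%:R.
Proof.
rewrite Jstar_tJ Jtau_Jrep -dual; apply: eq_bigr => l _.
by rewrite Jrep_mul !Jrep_tJ.
Qed.

Lemma trmx_Jrep_Jstar l P : P \in unitmx ->
    (forall x, (cm l (sI x))^T *m P = P *m cm l x) ->
  forall u, (Jrep l (Jst u))^T = P *m Jrep l u *m invmx P.
Proof.
move=> P_unit cmP u; rewrite Jrep_Jstar raddf_sum mulmx_sumr mulmx_suml.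
apply: eq_bigr => x _.
by rewrite /= linearZ /= -scalemxAr -scalemxAl -(cmP x) mulmxK.
Qed.

Lemma Jstar_mul u w :
  Jst (Jmul gm sI u w) = Jmul gm sI (Jst w) (Jst u).
Proof.
apply: Jrep_inj => l; apply: trmx_inj; have [P P_unit cmP] := transp l.
rewrite !(trmx_Jrep_Jstar P_unit cmP) !Jrep_mul trmx_mul.
by rewrite !(trmx_Jrep_Jstar P_unit cmP) !mulmxA mulmxKV.
Qed.

End JAlgebra.

Section ValuationRing.
Variables (G : porderZmodType) (K : fieldType) (nu : K -> G) (F : fieldType) (pi : K -> F).
Hypotheses (ordG : tot_ord_group G) (val_nu : surj_valuation nu)
  (res_pi : residue_map nu pi).

Local Notation O := (valO nu).

Lemma valuationM x y : x != 0 -> y != 0 -> nu (x * y) = nu x + nu y.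
Proof. by case: val_nu => M _ _; apply: M. Qed.

Lemma valuation1 : nu 1 = 0.
Proof. by apply: (@addrI _ (nu 1)); rewrite -valuationM ?oner_neq0 // mulr1 addr0. Qed.

Lemma valOE x : (x \in O) = (x == 0) || (0 <= nu x).
Proof. by []. Qed.

Lemma valO0 : 0 \in O.
Proof. by rewrite valOE eqxx. Qed.

Lemma valO_valuation0 x : nu x = 0 -> x \in O.
Proof. by rewrite valOE => ->; rewrite lexx orbT. Qed.

Lemma valO1 : 1 \in O.
Proof. exact/valO_valuation0/valuation1. Qed.

Lemma valOD x y : x \in O -> y \in O -> x + y \in O.
Proof.
have [->|x0] := eqVneq x 0; first by rewrite add0r.
have [->|y0] := eqVneq y 0; first by rewrite addr0.
have [->|xy0] := eqVneq (x + y) 0; first by rewrite valO0.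
rewrite !valOE (negbTE x0) (negbTE y0) (negbTE xy0) /= => nu_x nu_y.
case: val_nu => _ /(_ x y x0 y0 xy0) /orP[] nu_xy _.
  exact: le_trans nu_x nu_xy.
exact: le_trans nu_y nu_xy.
Qed.

Lemma valOM x y : x \in O -> y \in O -> x * y \in O.
Proof.
have [->|x0] := eqVneq x 0; first by rewrite mul0r.
have [->|y0] := eqVneq y 0; first by rewrite mulr0.
rewrite !valOE (negbTE x0) (negbTE y0) valuationM //= => nu_x nu_y.
apply/orP; right; apply: le_trans nu_y _.
by rewrite -{1}[nu y]add0r; case: ordG => _; apply.
Qed.

Lemma valO_sum (J : finType) (f : J -> K) :
  (forall j, f j \in O) -> \sum_j f j \in O.
Proof.
by move=> Of; apply: (big_ind (fun x => x \in O)); [exact: valO0 | exact: valOD | move=> j _].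
Qed.

Lemma residueD : {in O &, {morph pi : x y / x + y}}.
Proof. by case: res_pi. Qed.

Lemma residueM : {in O &, {morph pi : x y / x * y}}.
Proof. by case: res_pi. Qed.

Lemma residue1 : pi 1 = 1.
Proof. by case: res_pi. Qed.

Lemma residue0 : pi 0 = 0.
Proof. by apply: (@addrI _ (pi 0)); rewrite -residueD ?valO0 // !addr0. Qed.

Lemma residue_nat (B : bool) : pi B%:R = B%:R.
Proof. by case: B; rewrite ?residue1 ?residue0. Qed.

Lemma residue_sum (J : finType) (f : J -> K) :
  (forall j, f j \in O) -> pi (\sum_j f j) = \sum_j pi (f j).
Proof.
move=> Of; have [] // : (\sum_j f j \in O) /\ pi (\sum_j f j) = \sum_j pi (f j).
apply: (big_ind2 (fun s t => s \in O /\ pi s = t)) => [|s1 t1 s2 t2 [Os1 <-] [Os2 <-]|j _].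
- by rewrite valO0 residue0.
- by rewrite valOD // residueD.
- by rewrite Of.
Qed.

Lemma valuationV x : x != 0 -> nu x^-1 = - nu x.
Proof.
move=> x_neq0; apply: (@addrI _ (nu x)).
by rewrite -valuationM ?invr_eq0 // mulfV // valuation1 subrr.
Qed.

Lemma residueV x : nu x = 0 -> x != 0 -> pi x^-1 = (pi x)^-1 /\ pi x != 0.
Proof.
move=> nu_x0 x_neq0; have nu_xV0 : nu x^-1 = 0 by rewrite valuationV // nu_x0 oppr0.
have pi_xxV : pi x * pi x^-1 = 1.
  by rewrite -residueM ?valO_valuation0 // mulfV // residue1.
have pi_x_neq0 : pi x != 0 by apply: contra_eq_neq pi_xxV => ->; rewrite mul0r eq_sym oner_neq0.
by split=> //; apply: (mulfI pi_x_neq0); rewrite pi_xxV mulfV.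
Qed.

Definition integral_mx m n (A : 'M[K]_(m, n)) := forall i j, A i j \in O.

Lemma integral_mulmx m n p (A : 'M[K]_(m, n)) (B : 'M[K]_(n, p)) :
  integral_mx A -> integral_mx B -> integral_mx (A *m B).
Proof. by move=> OA OB i j; rewrite mxE; apply: valO_sum => k; apply: valOM. Qed.

Lemma map_residue_mulmx m n p (A : 'M[K]_(m, n)) (B : 'M[K]_(n, p)) :
  integral_mx A -> integral_mx B -> map_mx pi (A *m B) = map_mx pi A *m map_mx pi B.
Proof.
move=> OA OB; apply/matrixP => i j; rewrite !mxE residue_sum => [|k]; last exact: valOM.
by apply: eq_bigr => k _; rewrite residueM // !mxE.
Qed.

Lemma integral_trmx m n (A : 'M[K]_(m, n)) : integral_mx A -> integral_mx A^T.
Proof. by move=> OA i j; rewrite mxE. Qed.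

Lemma integral_sum m n (J : finType) (A : J -> 'M[K]_(m, n)) :
  (forall j, integral_mx (A j)) -> integral_mx (\sum_j A j).
Proof. by move=> OA i k; rewrite summxE; apply: valO_sum => j; apply: OA. Qed.

Lemma map_residue_sum m n (J : finType) (A : J -> 'M[K]_(m, n)) :
  (forall j, integral_mx (A j)) -> map_mx pi (\sum_j A j) = \sum_j map_mx pi (A j).
Proof.
move=> OA; apply/matrixP => i k; rewrite mxE !summxE residue_sum => [|j]; last exact: OA.
by apply: eq_bigr => j _; rewrite mxE.
Qed.

Lemma integral_mxtrace n (A : 'M[K]_n) : integral_mx A -> \tr A \in O.
Proof. by move=> OA; apply: valO_sum. Qed.

Lemma residue_mxtrace n (A : 'M[K]_n) : integral_mx A -> pi (\tr A) = \tr (map_mx pi A).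
Proof.
by move=> OA; rewrite residue_sum //; apply: eq_bigr => i _; rewrite mxE.
Qed.

End ValuationRing.

Section SymmetricAlgebra.
Variables (K : fieldType) (H : falgType K) (tau : H -> K) (st : H -> H)
  (I : finType) (b : I -> H) (sI : I -> I)
  (L : finType) (d : L -> nat) (rho : forall l, H -> 'M[K]_(d l)) (c : L -> K).
Hypotheses (sym_tau : sym_trace_form tau) (anti_st : lin_invol_antiaut st)
  (basis_b : star_sym_basis tau st b) (b_sI : forall x, b (sI x) = st (b x))
  (rep_rho : forall l, alg_rep (rho l)) (wedderburn : split_semisimple_reps rho)
  (c_neq0 : forall l, c l != 0)
  (tau_schur : forall h, tau h = \sum_l (c l)^-1 * \tr (rho l h)).

Let tau_is_scalar : scalar tau. Proof. by case: sym_tau. Qed.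
HB.instance Definition _ := GRing.isLinear.Build K H K _ tau tau_is_scalar.
Let st_is_linear : linear st. Proof. by case: anti_st. Qed.
HB.instance Definition _ := GRing.isLinear.Build K H H _ st st_is_linear.
Let rho_is_linear l : linear (rho l). Proof. by case: (rep_rho l). Qed.
HB.instance Definition _ l :=
  GRing.isLinear.Build K H 'M[K]_(d l) _ (rho l) (rho_is_linear l).

Let tauC x y : tau (x * y) = tau (y * x). Proof. by case: sym_tau. Qed.
Let stM x y : st (x * y) = st y * st x. Proof. by case: anti_st. Qed.
Let stK : involutive st. Proof. by case: anti_st. Qed.
Let rhoM l x y : rho l (x * y) = rho l x *m rho l y. Proof. by case: (rep_rho l). Qed.
Let tau_b x y : tau (b x * st (b y)) = (x == y)%:R. Proof. by case: basis_b. Qed.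

Lemma sI_involutive : involutive sI.
Proof.
have b_inj : injective b.
  move=> x y bxy; apply/eqP; have := tau_b x y; rewrite bxy tau_b eqxx.
  by case: eqP => // _ /eqP; rewrite oner_eq0.
by move=> x; apply: b_inj; rewrite !b_sI stK.
Qed.

Lemma basis_expansion w : w = \sum_y tau (w * st (b y)) *: b y.
Proof.
case: basis_b => /andP[/eqP span_b free_b] _ _.
have w_span : w \in <<[seq b x | x <- enum I]>>%VS by rewrite span_b memvf.
have [k -> _] := free_span free_b w_span.
rewrite big_map big_enum /=; apply: eq_big => // y _; congr (_ *: _).
rewrite mulr_suml linear_sum (bigD1 y) //= big1 => [|x /negbTE xy]; last first.
  by rewrite -scalerAl linearZ /= tau_b xy mulr0.
by rewrite -scalerAl linearZ /= tau_b eqxx mulr1 addr0.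
Qed.

Lemma basis_expansion_st w : w = \sum_y tau (w * b y) *: st (b y).
Proof.
rewrite {1}(basis_expansion w) (reindex_inj (inv_inj sI_involutive)) /=.
by apply: eq_bigr => y _; rewrite b_sI stK.
Qed.

Lemma star_sym_basis_enum_val :
  star_sym_basis tau st (fun i : 'I_#|I| => b (enum_val i)).
Proof.
case: basis_b => basis_b' _ _; split=> [|i|i j]; last first.
- by rewrite tau_b (inj_eq enum_val_inj).
- by exists (enum_rank (sI (enum_val i))); rewrite enum_rankK b_sI.
have perm_b : perm_eq [seq b (enum_val i) | i <- enum 'I_#|I|] [seq b x | x <- enum I].
  rewrite (map_comp b enum_val); apply: perm_map; apply: uniq_perm.
  - by rewrite map_inj_uniq ?enum_uniq //; apply: enum_val_inj.
  - exact: enum_uniq.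
  by move=> x; rewrite mem_enum; apply/mapP; exists (enum_rank x); rewrite ?mem_enum ?enum_rankK.
by rewrite /basis_of (eq_span (perm_mem perm_b)) (perm_free perm_b).
Qed.

(* Evaluate the trace formula on the element h with rho_m(h) = E_pq and
   rho_l'(h) = 0 for l' != m, which exists by Wedderburn's theorem. *)
Lemma rho_schur_relations : schur_relations (fun l x => rho l (b x)) c sI.
Proof.
move=> l m i j q p /=.
pose E l' : 'M[K]_(d l') :=
  \matrix_(i', j') ((l' == m) && (i' == p :> nat) && (j' == q :> nat))%:R.
have tr_E (A : 'M[K]_(d m)) : \tr (E m *m A) = A q p.
  rewrite /mxtrace (bigD1 p) //= [X in _ + X]big1 => [|i' i'p]; last first.
    rewrite mxE big1 // => k _.
    by rewrite mxE eqxx (negbTE (i'p : (i' != p :> nat))) mul0r.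
  rewrite addr0 mxE (bigD1 q) //= [X in _ + X]big1 => [|k kq]; last first.
    by rewrite mxE !eqxx (negbTE (kq : (k != q :> nat))) mul0r.
  by rewrite addr0 mxE !eqxx mul1r.
case: wedderburn => _ /(_ E) [h [rho_h _]].
have tau_h x : tau (h * st (b x)) = (c m)^-1 * rho m (b (sI x)) q p.
  rewrite tau_schur (bigD1 m) //= [X in _ + X]big1 => [|l' /negbTE l'm]; last first.
    rewrite rhoM rho_h (_ : E l' = 0) ?mul0mx ?mxtrace0 ?mulr0 //.
    by apply/matrixP => i' j'; rewrite !mxE l'm.
  by rewrite addr0 rhoM rho_h b_sI tr_E.
have := congr1 (fun A : 'M[K]_(d l) => A i j) (rho_h l).
rewrite {1}(basis_expansion h) linear_sum summxE mxE => <-.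
rewrite mulrC mulr_sumr; apply: eq_bigr => x _.
by rewrite /= linearZ mxE tau_h !mulrA mulfV // mul1r mulrC.
Qed.

Lemma rho_dual_trace_relations : dual_trace_relations (fun l x => rho l (b x)) c sI.
Proof. by move=> x y; rewrite -tau_b tau_schur; under [RHS]eq_bigr do rewrite rhoM -b_sI. Qed.

Definition gram l := \sum_x (rho l (b x))^T *m rho l (b x).

(* Expanding [h b_x] and [st (b_x) h] in the basis and its dual turns both
   sides into [sum_(x,z) tau(st (b_x) h b_z) rho(st (b_x))^T rho(st (b_z))]. *)
Lemma gram_intertwines l h : (rho l (st h))^T *m gram l = gram l *m rho l h.
Proof.
rewrite /gram (reindex_inj (inv_inj sI_involutive)) /= mulmx_sumr mulmx_suml.
transitivity (\sum_x \sum_z tau (h * b x * st (b z)) *: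
   ((rho l (b (sI z)))^T *m rho l (b (sI x)))).
  apply: eq_bigr => x _.
  rewrite mulmxA -trmx_mul -rhoM b_sI -stM {1}(basis_expansion (h * b x)).
  rewrite !linear_sum mulmx_suml; apply: eq_bigr => z _.
  by rewrite !linearZ /= -scalemxAl b_sI.
transitivity (\sum_x \sum_z tau (st (b x) * h * b z) *:
   ((rho l (b (sI x)))^T *m rho l (b (sI z)))); last first.
  apply: eq_bigr => x _.
  rewrite -mulmxA -rhoM b_sI [in RHS](basis_expansion_st (st (b x) * h)).
  rewrite linear_sum mulmx_sumr; apply: eq_bigr => z _.
  by rewrite linearZ -scalemxAr -!b_sI.
rewrite [RHS]exchange_big /=; apply: eq_bigr => x _; apply: eq_bigr => z _.
by rewrite tauC mulrA.
Qed.

Section Reduction.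
Variables (G : porderZmodType) (nu : K -> G) (F : fieldType) (pi : K -> F)
  (a : L -> G) (vp : G -> K).
Hypotheses (ordG : tot_ord_group G) (val_nu : surj_valuation nu)
  (res_pi : residue_map nu pi) (realF : formally_real F)
  (nu_c : forall l, nu (c l) = - (a l *+ 2)) (vp_hom : vpow_hom nu a vp)
  (balanced_rho : forall l, balanced nu tau st (rho l) (a l)).

Local Notation O := (valO nu).
Local Notation cm := (cres pi b rho a vp).
Local Notation fr := (fun l => pi (fsch c a vp l)).
Let vrho l x := vp (a l) *: rho l (b x).

Let in_span_a l : in_span a (a l).
Proof.
exists (fun l' => (l' == l)%:Z); rewrite (bigD1 l) //= eqxx mulr1z big1 ?addr0 //.
by move=> l' /negbTE ->; rewrite mulr0z.
Qed.

Let vp_neq0 l : vp (a l) != 0.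
Proof. by case: vp_hom => _ vp_neq0 _; apply/vp_neq0/in_span_a. Qed.

Let nu_vp l : nu (vp (a l)) = a l.
Proof. by case: vp_hom => _ _ nu_vp; apply/nu_vp/in_span_a. Qed.

Let fschE l : fsch c a vp l = vp (a l) ^+ 2 * c l.
Proof. by case: vp_hom => vpD _ _; rewrite /fsch mulr2n vpD ?in_span_a. Qed.

Lemma integral_vrho l x : integral_mx nu (vrho l x).
Proof.
move=> i j; rewrite mxE.
have := balanced_rho star_sym_basis_enum_val (enum_rank x) i j.
rewrite enum_rankK /vge; have [->|rho0] := eqVneq (rho l (b x) i j) 0.
  by rewrite mulr0 valO0.
rewrite valOE valuationM // nu_vp => /= nu_rho; apply/orP; right.
case: ordG => _ /(_ _ _ (a l) nu_rho); by rewrite addNr addrC.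
Qed.

Lemma valuation_fsch l : nu (fsch c a vp l) = 0.
Proof.
by rewrite fschE valuationM ?mulf_neq0 ?expf_neq0 // expr2 valuationM // nu_vp nu_c subrr.
Qed.

Lemma fsch_neq0 l : fsch c a vp l != 0.
Proof. by rewrite fschE mulf_neq0 ?expf_neq0. Qed.

Let fsch_in_O l : fsch c a vp l \in O.
Proof. exact/valO_valuation0/valuation_fsch. Qed.

Let fschV_in_O l : (fsch c a vp l)^-1 \in O.
Proof. by apply/valO_valuation0; rewrite valuationV ?fsch_neq0 // valuation_fsch oppr0. Qed.

Lemma cres_fr_neq0 l : fr l != 0.
Proof. by case: (residueV val_nu res_pi (valuation_fsch l) (fsch_neq0 l)). Qed.

Let residue_fschV l : pi (fsch c a vp l)^-1 = (fr l)^-1.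
Proof. by case: (residueV val_nu res_pi (valuation_fsch l) (fsch_neq0 l)). Qed.

Lemma cres_schur_relations : schur_relations cm fr sI.
Proof.
move=> l m i j q p /=.
set δ := (l == m) && _ && _.
have O_vrho l' x (i' j' : 'I_(d l')) : vp (a l') * rho l' (b x) i' j' \in O.
  by have := integral_vrho x i' j'; rewrite mxE.
have schurK : \sum_x vrho l x i j * vrho m (sI x) q p = δ%:R * fsch c a vp m.
  transitivity (vp (a l) * vp (a m) * \sum_x rho l (b x) i j * rho m (b (sI x)) q p).
    by rewrite mulr_sumr; apply: eq_bigr => x _; rewrite !mxE mulrACA.
  rewrite rho_schur_relations fschE /δ.
  case: (eqVneq l m) => [lm|lm]; last by rewrite /= !mul0r mulr0.
  by subst m; rewrite /= expr2; ring.
transitivity (pi (\sum_x vrho l x i j * vrho m (sI x) q p)).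
  rewrite (residue_sum val_nu res_pi) => [|x]; last first.
    by rewrite !mxE; apply: (valOM ordG val_nu).
  by apply: eq_bigr => x _; rewrite !mxE -(residueM res_pi) ?O_vrho.
rewrite schurK (residueM res_pi) ?(residue_nat res_pi) ?fsch_in_O //.
  by rewrite /δ; case: (_ && _); rewrite ?valO0 ?(valO1 val_nu).
Qed.

Lemma cres_dual_trace_relations : dual_trace_relations cm fr sI.
Proof.
move=> x y.
have O_prod l : integral_mx nu (vrho l x *m vrho l (sI y)).
  by apply: integral_mulmx => //; apply: integral_vrho.
have O_term l : (fsch c a vp l)^-1 * \tr (vrho l x *m vrho l (sI y)) \in O.
  by apply: valOM => //; apply: integral_mxtrace.
have dualK : \sum_l (fsch c a vp l)^-1 * \tr (vrho l x *m vrho l (sI y)) = (x == y)%:R.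
  rewrite -rho_dual_trace_relations; apply: eq_bigr => l _.
  rewrite /vrho -scalemxAl -scalemxAr scalerA mxtraceZ fschE.
  by field; rewrite c_neq0 vp_neq0.
rewrite -(residue_nat res_pi) -dualK (residue_sum val_nu res_pi) //.
apply: eq_bigr => l _; rewrite [RHS](residueM res_pi) ?fschV_in_O ?integral_mxtrace //.
rewrite residue_fschV (residue_mxtrace val_nu res_pi) //.
by rewrite (map_residue_mulmx ordG val_nu res_pi) //; apply: integral_vrho.
Qed.

Lemma cres_transpose_conjugate : transpose_conjugate cm sI.
Proof.
move=> l; pose Q := \sum_x (vrho l x)^T *m vrho l x.
have O_vrho x : integral_mx nu (vrho l x) by apply: integral_vrho.
have O_gram x : integral_mx nu ((vrho l x)^T *m vrho l x).
  by apply: integral_mulmx => //; apply: integral_trmx.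
have O_Q : integral_mx nu Q by apply: integral_sum.
exists (map_mx pi Q) => [|y].
  rewrite (map_residue_sum val_nu res_pi) //.
  rewrite (eq_bigr (fun x => (cm l x)^T *m cm l x)) => [|x _]; last first.
    rewrite (map_residue_mulmx ordG val_nu res_pi) ?map_trmx //.
    exact: integral_trmx.
  apply: formally_real_gram_unitmx realF _ => v.
  exact: cm_rows_separate cres_fr_neq0 cres_schur_relations l v.
have QE : Q = vp (a l) ^+ 2 *: gram l.
  rewrite /gram scaler_sumr; apply: eq_bigr => x _.
  by rewrite /vrho [(_ *: _)^T]linearZ /= -scalemxAr -scalemxAl scalerA expr2.
have intertwine : (vrho l (sI y))^T *m Q = Q *m vrho l y.
  rewrite QE /vrho [(_ *: _)^T]linearZ /= -!scalemxAl -!scalemxAr b_sI.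
  by rewrite gram_intertwines !scalerA mulrC.
have := congr1 (map_mx pi) intertwine.
rewrite !(map_residue_mulmx ordG val_nu res_pi) ?map_trmx //.
exact: integral_trmx.
Qed.

Lemma cres_relations :
  [/\ involutive sI, forall l, fr l != 0, schur_relations cm fr sI,
      dual_trace_relations cm fr sI & transpose_conjugate cm sI].
Proof.
split; [exact: sI_involutive | exact: cres_fr_neq0 | exact: cres_schur_relations |
        exact: cres_dual_trace_relations | exact: cres_transpose_conjugate].
Qed.

End Reduction.

End SymmetricAlgebra.

Theorem mainTheorem8
  (G : porderZmodType) (K : fieldType) (nu : K -> G)
  (F : fieldType) (pi : K -> F)
  (H : falgType K) (tau : H -> K) (st : H -> H)
  (I : finType) (b : I -> H) (sI : I -> I)
  (L : finType) (d : L -> nat) (rho : forall l, H -> 'M[K]_(d l))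
  (c : L -> K) (a : L -> G) (vp : G -> K) :
  tot_ord_group G ->
  surj_valuation nu ->
  residue_map nu pi ->
  formally_real F ->
  sym_trace_form tau ->
  lin_invol_antiaut st ->
  star_sym_basis tau st b ->
  (forall x, b (sI x) = st (b x)) ->
  (forall l, alg_rep (rho l)) ->
  split_semisimple_reps rho ->
  (forall l, c l != 0) ->
  (forall h, tau h = \sum_l (c l)^-1 * \tr (rho l h)) ->
  (forall l, nu (c l) = - (a l *+ 2)) ->
  vpow_hom nu a vp ->
  (forall l, balanced nu tau st (rho l) (a l)) ->
  let cm := cres pi b rho a vp in
  let fr := fun l => pi (fsch c a vp l) in
  let gm := gammaJ cm fr in
  let nx := nJ cm fr sI in
  ((forall u v w, Jmul gm sI (Jmul gm sI u v) w = Jmul gm sI u (Jmul gm sI v w)) /\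
   (forall u, Jmul gm sI (Jone nx) u = u /\ Jmul gm sI u (Jone nx) = u)) /\
  ((forall x, Jtau nx (tJ F x) = nx x) /\
   (forall u v, Jtau nx (Jmul gm sI u v) = Jtau nx (Jmul gm sI v u)) /\
   (forall u, (forall v, Jtau nx (Jmul gm sI u v) = 0) -> u = 0)) /\
  (bijective (Jstar (F:=F) sI) /\
   (forall u v, Jstar (F:=F) sI (Jmul gm sI u v) = Jmul gm sI (Jstar (F:=F) sI v) (Jstar (F:=F) sI u)) /\
   (forall x, Jstar (F:=F) sI (tJ F x) = tJ F (sI x)) /\
   (forall x y, Jtau nx (Jmul gm sI (tJ F x) (Jstar (F:=F) sI (tJ F y))) = (x == y)%:R)).
Proof.
move=> ordG val_nu res_pi realF sym_tau anti_st basis_b b_sI rep_rho wedderburn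
  c_neq0 tau_schur nu_c vp_hom balanced_rho cm fr gm nx.
have [sIK fr_neq0 schur dual transp] :=
  cres_relations sym_tau anti_st basis_b b_sI rep_rho wedderburn c_neq0
    tau_schur ordG val_nu res_pi realF nu_c vp_hom balanced_rho.
split; [split | split; [split; [|split] | split; [|split; [|split]]]].
- exact: Jmul_assoc.
- exact: Jmul1.
- exact: Jtau_tJ.
- exact: Jtau_mulC.
- exact: Jtau_nondegenerate.
- exact: Jstar_bij.
- exact: Jstar_mul.
- exact: Jstar_tJ.
- exact: Jtau_dual_basis.
Qed.
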